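(* Let $b>0$, $p_0>0$, $\alpha\in(1,2)$, and let $(p_\ell)_{\ell\ge1}$ be a probability distribution on $\{1,2,\dots\}$ with $p_\ell\sim p_0\ell^{-(1+\alpha)}$ as $\ell\to\infty$. Let $k,j\in\mathbb N$ with $k\ge j\ge2$ and let $c_0>0$. For $K\ge1$ and $n\ge c_0/2$ define \[R_j(K,n)=K^\alpha nb\sum_{\ell\ge j-1}p_\ell\,\frac{\binom{Kn+\ell-k}{\ell+1-j}}{\binom{Kn+\ell}{\ell+1}},\qquad R_j(n)=\frac{p_0b}{n^{\alpha-1}}\int_0^1u^j(1-u)^{k-j}\frac{u^{1-\alpha}(1-u)^{\alpha-1}}{u^2}\,du.\] Then $R_j(K,n)\to R_j(n)$ as $K\to\infty$, uniformly in $n\ge c_0/2$.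
   Context: Binomial coefficients with non-integer upper argument are understood in the generalized sense $\binom{x}{r}=\frac{x(x-1)\cdots(x-r+1)}{r!}$ (equivalently via Gamma functions), for real $x$ and nonnegative integer $r$. *)

From Stdlib Require Import Reals Lra Factorial.
From Coquelicot Require Import Coquelicot.
Open Scope R_scope.

Fixpoint falling (x : R) (r : nat) : R :=
  match r with
  | O => 1
  | S r' => falling x r' * (x - INR r')
  end.

Definition gbinom (x : R) (r : nat) : R := falling x r / INR (fact r).

Definition RjKn (p : nat -> R) (alpha b : R) (k j : nat) (K n : R) : R :=
  Rpower K alpha * n * b *
  Series (fun m : nat =>
    let l := (m + (j - 1))%nat in
    p l * (gbinom (K * n + INR l - INR k) (l + 1 - j)
           / gbinom (K * n + INR l) (l + 1))).

Definition Rj_integrand (alpha : R) (k j : nat) (u : R) : R :=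
  u ^ j * (1 - u) ^ (k - j) *
  (Rpower u (1 - alpha) * Rpower (1 - u) (alpha - 1) / u ^ 2).

From Stdlib Require Import Reals Lra Lia Factorial.
From Coquelicot Require Import Coquelicot.
Open Scope R_scope.

(* Put x = K n and u_l = l / (x + l).  Then R_j(K,n) = b n^(1-alpha) S(x) with
   S(x) = x^alpha sum_l p_l binom(x+l-k, l+1-j) / binom(x+l, l+1).
   Uniformly in large x, for large l the l-th term of S(x) equals
   p0 int_{u_l}^{u_(l+1)} h up to a factor 1 + o(1), h being the integrand of
   R_j(n): comparing falling factorials with powers, and using that h varies by a
   factor 1 + O(1/l) on [u_l, u_(l+1)], both are asymptotic to
   x^alpha l^(-1-alpha) l^j x^(k-j) / (x+l)^k.  Summing, the tail telescopes to
   p0 int_{u_L}^1 h, the finitely many head terms are O(x^(alpha-2)), and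
   int_0^{u_L} h <= u_L^(j-alpha) / (j-alpha) -> 0.  Hence S(x) -> p0 int_0^1 h,
   and n^(1-alpha) <= (c0/2)^(1-alpha) makes the convergence uniform in n. *)

Lemma Rpower_pos x g : 0 < Rpower x g.
Proof. apply exp_pos. Qed.

Lemma Rpower_1_l g : Rpower 1 g = 1.
Proof. unfold Rpower. rewrite ln_1, Rmult_0_r. apply exp_0. Qed.

Lemma Rpower_div a b g : 0 < a -> 0 < b -> Rpower (a / b) g = Rpower a g / Rpower b g.
Proof.
  intros Ha Hb. unfold Rpower, Rdiv.
  rewrite ln_mult, ln_Rinv, <- exp_Ropp, <- exp_plus by (try apply Rinv_0_lt_compat; lra).
  f_equal. ring.
Qed.

Lemma Rpower_le_neg g x y : g <= 0 -> 0 < x <= y -> Rpower y g <= Rpower x g.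
Proof.
  intros Hg Hxy.
  replace g with (- - g) by ring. rewrite !(Rpower_Ropp _ (- g)).
  apply Rinv_le_contravar. apply Rpower_pos. apply Rle_Rpower_l; lra.
Qed.

Lemma Rpower_le_2 u c : 1/2 <= u <= 1 -> -1 <= c -> Rpower u c <= 2.
Proof.
  intros Hu Hc. destruct (Rle_dec 0 c).
  - apply Rle_trans with (Rpower 1 c); [apply Rle_Rpower_l; lra|]. rewrite Rpower_1_l. lra.
  - apply Rle_trans with (Rpower (/ 2) c); [apply Rpower_le_neg; lra|].
    replace (Rpower (/ 2) c) with (Rpower 2 (- c))
      by (unfold Rpower; rewrite ln_Rinv by lra; f_equal; ring).
    rewrite <- (Rpower_1 2) at 2 by lra. apply Rle_Rpower; lra.
Qed.

Lemma Rpower_small_at_infinity g t : g < 0 -> 0 < t ->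
  exists X, 0 < X /\ forall x, X <= x -> Rpower x g < t.
Proof.
  intros Hg Ht. set (z := Rpower t (1 / g)).
  assert (Hz : 0 < z) by apply Rpower_pos.
  exists (z + 1). split; [lra|]. intros x Hx.
  assert (Ez : Rpower z g = t).
  { unfold z. rewrite Rpower_mult. replace (1 / g * g) with 1 by (field; lra).
    apply Rpower_1; auto. }
  rewrite <- Ez. replace g with (- - g) by ring. rewrite !(Rpower_Ropp _ (- g)).
  apply Rinv_lt_contravar.
  - apply Rmult_lt_0_compat; apply Rpower_pos.
  - apply Rlt_Rpower_l; lra.
Qed.

Definition near_one (r t : R) := Rabs (r - 1) <= t.

Lemma near_one_iff r t : near_one r t <-> 1 - t <= r <= 1 + t.
Proof. unfold near_one. rewrite Rabs_le_between'. lra. Qed.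

Lemma near_one_weaken r t t' : near_one r t -> t <= t' -> near_one r t'.
Proof. unfold near_one; lra. Qed.

Lemma near_one_one t : 0 <= t -> near_one 1 t.
Proof. intros; unfold near_one. rewrite Rminus_eq_0, Rabs_R0. auto. Qed.

Lemma near_one_between lo r hi t :
  lo <= r <= hi -> near_one lo t -> near_one hi t -> near_one r t.
Proof. rewrite !near_one_iff. lra. Qed.

Lemma near_one_ratio a b t : 0 < b -> (1 - t) * b <= a <= (1 + t) * b -> near_one (a / b) t.
Proof.
  intros Hb Hab. rewrite near_one_iff.
  split; apply (Rmult_le_reg_r b); auto; replace (a / b * b) with a by (field; lra); lra.
Qed.

Lemma near_one_mul r s t t' :
  near_one r t -> near_one s t' -> t <= 1 -> near_one (r * s) (t + 2 * t').
Proof.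
  rewrite !near_one_iff. intros Hr Hs Ht.
  assert (0 <= t') by lra. split; nra.
Qed.

Lemma near_one_inv r t : near_one r t -> t <= 1/2 -> near_one (/ r) (2 * t).
Proof.
  rewrite !near_one_iff. intros Hr Ht.
  assert (0 < r) by lra. assert (0 <= t) by lra.
  split; apply (Rmult_le_reg_r r); auto; rewrite Rinv_l by lra; nra.
Qed.

Lemma exp_near_one t : Rabs t <= 1/2 -> near_one (exp t) (2 * Rabs t).
Proof.
  intros Ht. rewrite near_one_iff. rewrite Rabs_le_between in Ht.
  pose proof (exp_ineq1_le t). pose proof (exp_ineq1_le (- t)).
  assert (exp t * exp (- t) = 1) by (rewrite <- exp_plus, Rplus_opp_r; apply exp_0).
  pose proof (exp_pos t). pose proof (exp_pos (- t)).
  destruct (Rle_dec 0 t).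
  - rewrite Rabs_right by lra. split; nra.
  - rewrite Rabs_left by lra. split; nra.
Qed.

Lemma Rabs_ln_le r t : near_one r t -> t <= 1/2 -> Rabs (ln r) <= 2 * t.
Proof.
  rewrite near_one_iff. intros Hr Ht. assert (0 < r) by lra.
  assert (ln r <= r - 1).
  { rewrite <- (ln_exp (r - 1)). apply ln_le; auto.
    pose proof (exp_ineq1_le (r - 1)). lra. }
  assert (ln (/ r) <= / r - 1).
  { rewrite <- (ln_exp (/ r - 1)). apply ln_le. apply Rinv_0_lt_compat; lra.
    pose proof (exp_ineq1_le (/ r - 1)). lra. }
  rewrite ln_Rinv in * by lra.
  assert (/ r <= 1 + 2 * t).
  { apply (Rmult_le_reg_r r); auto. rewrite Rinv_l by lra. nra. }
  apply Rabs_le. lra.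
Qed.

Lemma Rpower_near_one r g t : near_one r t -> t <= 1/2 -> 4 * Rabs g * t <= 1 ->
  near_one (Rpower r g) (4 * Rabs g * t).
Proof.
  intros Hr Ht Hg. pose proof (Rabs_ln_le r t Hr Ht).
  assert (Rabs (g * ln r) <= 2 * Rabs g * t).
  { rewrite Rabs_mult. pose proof (Rabs_pos g). nra. }
  eapply near_one_weaken. apply exp_near_one. lra. lra.
Qed.

Lemma pow_near_one r n t : near_one r t -> t <= 1/2 -> 4 * INR n * t <= 1 ->
  near_one (r ^ n) (4 * INR n * t).
Proof.
  intros Hr Ht Hn. assert (Hr0 : 0 < r) by (rewrite near_one_iff in Hr; lra).
  rewrite <- Rpower_pow by auto.
  rewrite <- (Rabs_right (INR n)) at 2 by (apply Rle_ge, pos_INR).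
  apply Rpower_near_one; auto. rewrite Rabs_right by (apply Rle_ge, pos_INR). auto.
Qed.

Lemma pow_near_one_sq (n m : nat) (y z : R) : (n <= m)%nat -> (1 <= m)%nat ->
  8 * INR m ^ 2 <= y -> near_one z (INR m / y) -> near_one (z ^ n) (4 * INR m ^ 2 / y).
Proof.
  intros Hnm Hm Hy Hz.
  assert (Hm1 : 1 <= INR m) by (apply (le_INR 1); auto).
  assert (Hn : 0 <= INR n <= INR m) by (split; [apply pos_INR | apply le_INR; auto]).
  replace (INR m ^ 2) with (INR m * INR m) in Hy |- * by ring.
  assert (Hy0 : 0 < y) by nra.
  assert (Ht : INR m / y <= 1/8) by (apply Rle_div_l; nra).
  assert (Hmt : 4 * (INR m * INR m) / y = 4 * INR m * (INR m / y)) by (field; lra).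
  assert (0 <= INR m / y) by (apply Rdiv_le_0_compat; lra).
  assert (4 * (INR m * INR m) / y <= 1/2) by (apply Rle_div_l; lra).
  rewrite Hmt. apply near_one_weaken with (4 * INR n * (INR m / y)); [|nra].
  apply pow_near_one; auto; nra.
Qed.

Lemma falling_add y r s : falling y (r + s) = falling y r * falling (y - INR r) s.
Proof.
  induction s as [|s IH].
  - rewrite Nat.add_0_r. simpl. ring.
  - rewrite Nat.add_succ_r. simpl. rewrite IH, plus_INR. ring.
Qed.

Lemma fact_add_falling m r : INR (fact (m + r)) = INR (fact m) * falling (INR (m + r)) r.
Proof.
  revert m. induction r as [|r IH]; intro m; simpl.
  - rewrite Nat.add_0_r. ring.
  - replace (m + S r)%nat with (S m + r)%nat by lia.
    rewrite IH, fact_simpl, mult_INR.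
    replace (INR (S m + r) - INR r) with (INR (S m)) by (rewrite plus_INR; ring).
    ring.
Qed.

Lemma falling_bounds y r : INR r - 1 <= y ->
  0 <= (y - INR r + 1) ^ r <= falling y r /\ falling y r <= y ^ r.
Proof.
  induction r as [|r IH]; intros Hy.
  - simpl. lra.
  - cbn [falling pow]. rewrite S_INR in Hy |- *. pose proof (pos_INR r).
    destruct IH as [[H0 H1] H2]; [lra|].
    assert (0 <= y - INR r) by lra.
    split; [split|].
    + apply Rmult_le_pos; [lra | apply pow_le; lra].
    + replace (y - (INR r + 1) + 1) with (y - INR r) by ring.
      rewrite Rmult_comm. apply Rmult_le_compat_r; [lra|].
      apply Rle_trans with ((y - INR r + 1) ^ r); auto. apply pow_incr. lra.
    + rewrite (Rmult_comm y). apply Rmult_le_compat; lra.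
Qed.

Lemma falling_pos y r : INR r - 1 < y -> 0 < falling y r.
Proof.
  induction r as [|r IH]; intros Hy; simpl; [lra|].
  rewrite S_INR in Hy. pose proof (pos_INR r).
  apply Rmult_lt_0_compat; [apply IH|]; lra.
Qed.

Definition binom_ratio (k j : nat) (x : R) (l : nat) : R :=
  gbinom (x + INR l - INR k) (l + 1 - j) / gbinom (x + INR l) (l + 1).

Lemma binom_ratio_falling k j x l : (j <= k)%nat -> (k <= l + 1)%nat -> 0 < x ->
  binom_ratio k j x l
  = falling (x - 1) (k - j) * falling (INR l + 1) j / falling (x + INR l) k.
Proof.
  intros Hjk Hkl Hx. set (r := (l + 1 - k)%nat).
  assert (Er : INR r = INR l + 1 - INR k).
  { unfold r. rewrite minus_INR, plus_INR by lia. simpl. ring. }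
  assert (Ehead : falling (x + INR l) (l + 1)
                  = falling (x + INR l) k * falling (x + INR l - INR k) r).
  { rewrite <- falling_add. f_equal. unfold r. lia. }
  assert (Enum : falling (x + INR l - INR k) (l + 1 - j)
                 = falling (x + INR l - INR k) r * falling (x - 1) (k - j)).
  { replace (l + 1 - j)%nat with (r + (k - j))%nat by (unfold r; lia).
    rewrite falling_add. do 2 f_equal. rewrite Er. ring. }
  assert (Efact : INR (fact (l + 1)) = INR (fact (l + 1 - j)) * falling (INR l + 1) j).
  { replace (l + 1)%nat with (l + 1 - j + j)%nat at 1 by lia.
    rewrite fact_add_falling. replace (l + 1 - j + j)%nat with (l + 1)%nat by lia.
    rewrite plus_INR. reflexivity. }
  assert (El : INR (l + 1) = INR l + 1) by (rewrite plus_INR; reflexivity).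
  assert (Hkl' : INR k <= INR l + 1) by (rewrite <- El; apply le_INR; lia).
  assert (Hjl : INR j <= INR l + 1) by (rewrite <- El; apply le_INR; lia).
  assert (0 < falling (x + INR l) k) by (apply falling_pos; lra).
  assert (0 < falling (x + INR l - INR k) r) by (apply falling_pos; lra).
  assert (0 < falling (INR l + 1) j) by (apply falling_pos; lra).
  pose proof (INR_fact_lt_0 (l + 1 - j)).
  unfold binom_ratio, gbinom. rewrite Ehead, Enum, Efact.
  field. repeat split; lra.
Qed.

Lemma pow_div_distr r s n : s <> 0 -> (r / s) ^ n = r ^ n / s ^ n.
Proof. intros. unfold Rdiv. rewrite Rpow_mult_distr, pow_inv. reflexivity. Qed.

Lemma near_one_of_div (a y m : R) : 0 < y -> Rabs a <= m -> near_one ((y + a) / y) (m / y).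
Proof.
  intros Hy Ha. unfold near_one.
  replace ((y + a) / y - 1) with (a / y) by (field; lra).
  unfold Rdiv.
  rewrite Rabs_mult, (Rabs_right (/ y)) by (apply Rle_ge, Rlt_le, Rinv_0_lt_compat; lra).
  apply Rmult_le_compat_r; [apply Rlt_le, Rinv_0_lt_compat|]; lra.
Qed.

Lemma falling_succ_near_pow (r : nat) (L : R) : (1 <= r)%nat -> 8 * INR r ^ 2 <= L ->
  near_one (falling (L + 1) r / L ^ r) (4 * INR r ^ 2 / L).
Proof.
  intros Hr HL.
  assert (Hr1 : 1 <= INR r) by (apply (le_INR 1); auto).
  assert (HrL : 8 * INR r <= L) by (simpl in HL; nra).
  destruct (falling_bounds (L + 1) r) as [[B0 B1] B2]; [lra|].
  assert (HLr : 0 < L ^ r) by (apply pow_lt; lra).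
  apply near_one_between with (((L + (2 - INR r)) / L) ^ r) (((L + 1) / L) ^ r).
  - rewrite !pow_div_distr by lra.
    split; apply Rmult_le_compat_r; try (apply Rlt_le, Rinv_0_lt_compat; lra).
    + replace (L + (2 - INR r)) with (L + 1 - INR r + 1) by ring. auto.
    + auto.
  - apply pow_near_one_sq; auto. apply near_one_of_div; [lra|].
    apply Rabs_le. lra.
  - apply pow_near_one_sq; auto. apply near_one_of_div; [lra|].
    rewrite Rabs_R1. lra.
Qed.

Lemma falling_pred_near_pow (r k : nat) (x : R) : (r <= k)%nat -> (1 <= k)%nat ->
  8 * INR k ^ 2 <= x -> near_one (falling (x - 1) r / x ^ r) (4 * INR k ^ 2 / x).
Proof.
  intros Hrk Hk Hx.
  assert (Hk1 : 1 <= INR k) by (apply (le_INR 1); auto).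
  assert (Hr : 0 <= INR r <= INR k) by (split; [apply pos_INR | apply le_INR; auto]).
  assert (HkX : 8 * INR k <= x) by (simpl in Hx; nra).
  destruct (falling_bounds (x - 1) r) as [[B0 B1] B2]; [lra|].
  assert (Hxr : 0 < x ^ r) by (apply pow_lt; lra).
  assert (0 <= 4 * INR k ^ 2 / x) by (apply Rdiv_le_0_compat; [simpl; nra | lra]).
  apply near_one_between with (((x + - INR r) / x) ^ r) 1.
  - rewrite pow_div_distr by lra. split.
    + apply Rmult_le_compat_r; [apply Rlt_le, Rinv_0_lt_compat; lra|].
      replace (x + - INR r) with (x - 1 - INR r + 1) by ring. auto.
    + apply (Rmult_le_reg_r (x ^ r)); auto. unfold Rdiv.
      rewrite Rmult_assoc, Rinv_l, Rmult_1_l, Rmult_1_r by lra.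
      apply Rle_trans with ((x - 1) ^ r); auto. apply pow_incr. lra.
  - apply pow_near_one_sq; auto. apply near_one_of_div; [lra|].
    rewrite Rabs_Ropp, Rabs_right; lra.
  - apply near_one_one; auto.
Qed.

Lemma falling_near_pow_succ (k : nat) (y : R) : (1 <= k)%nat -> 8 * INR k ^ 2 <= y ->
  near_one (falling y k / (y ^ (k - 1) * (y + 1))) (4 * INR k ^ 2 / y).
Proof.
  intros Hk Hy.
  assert (Hk1 : 1 <= INR k) by (apply (le_INR 1); auto).
  assert (HkY : 8 * INR k <= y) by (simpl in Hy; nra).
  destruct (falling_bounds y k) as [[B0 B1] B2]; [lra|].
  assert (Ek : forall z, z ^ k = z ^ (k - 1) * z).
  { intros z. replace k with (S (k - 1)) at 1 by lia. simpl. ring. }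
  assert (Hy1 : 0 < y ^ (k - 1)) by (apply pow_lt; lra).
  assert (Hy2 : y ^ (k - 1) <= (y + 1) ^ (k - 1)) by (apply pow_incr; lra).
  assert (Hden : 0 < y ^ (k - 1) * (y + 1)) by (apply Rmult_lt_0_compat; lra).
  assert (0 <= 4 * INR k ^ 2 / y) by (apply Rdiv_le_0_compat; [simpl; nra | lra]).
  apply near_one_between with (((y + 1 + - INR k) / (y + 1)) ^ k) 1.
  - rewrite pow_div_distr by lra. split.
    + apply Rle_trans with ((y - INR k + 1) ^ k / (y ^ (k - 1) * (y + 1))).
      * unfold Rdiv. replace (y + 1 + - INR k) with (y - INR k + 1) by ring.
        apply Rmult_le_compat_l; auto. apply Rinv_le_contravar; auto.
        rewrite Ek. apply Rmult_le_compat_r; lra.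
      * unfold Rdiv. apply Rmult_le_compat_r; auto.
        apply Rlt_le, Rinv_0_lt_compat; auto.
    + apply (Rmult_le_reg_r (y ^ (k - 1) * (y + 1))); auto. unfold Rdiv.
      rewrite Rmult_assoc, Rinv_l, Rmult_1_l, Rmult_1_r by lra.
      apply Rle_trans with (y ^ k); auto. rewrite Ek. apply Rmult_le_compat_l; lra.
  - apply pow_near_one_sq; auto. eapply near_one_weaken.
    + apply near_one_of_div with (m := INR k); [lra|]. rewrite Rabs_Ropp, Rabs_right; lra.
    + unfold Rdiv. apply Rmult_le_compat_l; [lra|]. apply Rinv_le_contravar; lra.
  - apply near_one_one; auto.
Qed.

Definition slice_model (k j : nat) (x L : R) : R :=
  L ^ j * x ^ (k - j) / ((x + L) ^ (k - 1) * (x + L + 1)).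

Lemma binom_ratio_near_model k j x l theta :
  (1 <= j)%nat -> (j <= k)%nat -> (k <= l + 1)%nat -> 0 < theta <= 1/8 ->
  4 * INR k ^ 2 <= theta * x -> 4 * INR k ^ 2 <= theta * INR l ->
  near_one (binom_ratio k j x l / slice_model k j x (INR l)) (7 * theta).
Proof.
  intros Hj Hjk Hkl Htheta Hx Hl.
  set (L := INR l) in *.
  assert (Hk1 : 1 <= INR k) by (apply (le_INR 1); lia).
  assert (Hjk' : 1 <= INR j <= INR k) by (split; [apply (le_INR 1) | apply le_INR]; lia).
  assert (Hk2 : 1 <= INR k ^ 2) by (simpl; nra).
  assert (Hkk : INR k <= INR k ^ 2) by (simpl; nra).
  assert (Hx8 : 8 * INR k ^ 2 <= x) by nra.
  assert (HL8 : 8 * INR k ^ 2 <= L) by nra.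
  assert (Hx0 : 0 < x) by lra.
  assert (HL0 : 0 < L) by lra.
  assert (Htol : forall y, 8 * INR k ^ 2 <= y -> 4 * INR k ^ 2 <= theta * y ->
                   4 * INR k ^ 2 / y <= theta)
    by (intros y Hy8 Hy; apply Rle_div_l; lra).
  assert (Hjk2 : INR j ^ 2 <= INR k ^ 2) by (apply pow_incr; lra).
  assert (N1 : near_one (falling (L + 1) j / L ^ j) theta).
  { eapply near_one_weaken. apply falling_succ_near_pow; auto; lra.
    apply Rle_trans with (4 * INR k ^ 2 / L); [|apply Htol; auto].
    unfold Rdiv. apply Rmult_le_compat_r; [apply Rlt_le, Rinv_0_lt_compat|]; lra. }
  assert (N2 : near_one (falling (x - 1) (k - j) / x ^ (k - j)) theta).
  { eapply near_one_weaken. apply (falling_pred_near_pow _ k); auto; lia. apply Htol; auto. }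
  assert (N3 : near_one (falling (x + L) k / ((x + L) ^ (k - 1) * (x + L + 1))) theta).
  { eapply near_one_weaken; [apply falling_near_pow_succ; [lia | lra]|].
    apply Htol; [lra | rewrite Rmult_plus_distr_l; lra]. }
  assert (0 < L ^ j) by (apply pow_lt; lra).
  assert (0 < x ^ (k - j)) by (apply pow_lt; lra).
  assert (0 < (x + L) ^ (k - 1)) by (apply pow_lt; lra).
  assert (0 < falling (x + L) k) by (apply falling_pos; lra).
  replace (binom_ratio k j x l / slice_model k j x L)
    with (falling (L + 1) j / L ^ j * (falling (x - 1) (k - j) / x ^ (k - j))
          * / (falling (x + L) k / ((x + L) ^ (k - 1) * (x + L + 1)))).
  2:{ unfold slice_model. rewrite binom_ratio_falling by (auto; lra). fold L.
      field. repeat split; lra. }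
  apply near_one_weaken with ((theta + 2 * theta) + 2 * (2 * theta)); [|lra].
  apply near_one_mul; [apply near_one_mul; auto; lra | apply near_one_inv; auto; lra | lra].
Qed.

Definition near0_majorant (alpha : R) (j : nat) (v : R) : R :=
  Rpower v (INR j - alpha) / (INR j - alpha).

Section Integrand.

Variables (alpha : R) (k j : nat).
Hypotheses (Halpha : 1 < alpha < 2) (Hj : (2 <= j)%nat) (Hjk : (j <= k)%nat).

Local Notation h := (Rj_integrand alpha k j).
Local Notation G := (near0_majorant alpha j).

Lemma Rj_integrand_Rpower u : 0 < u < 1 ->
  h u = Rpower u (INR j - 1 - alpha) * Rpower (1 - u) (INR k - INR j + alpha - 1).
Proof.
  intros Hu. unfold Rj_integrand.
  rewrite <- (Rpower_pow j u), <- (Rpower_pow (k - j) (1 - u)), <- (Rpower_pow 2 u) by lra.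
  unfold Rpower, Rdiv. rewrite <- exp_Ropp, <- !exp_plus.
  f_equal. rewrite minus_INR by exact Hjk. simpl INR. ring.
Qed.

Lemma Rj_integrand_continuous z : 0 < z < 1 -> continuous h z.
Proof.
  intros Hz. apply (ex_derive_continuous (K := R_AbsRing) (V := R_NormedModule)).
  unfold Rj_integrand, Rpower. auto_derive. repeat split; try lra. nra.
Qed.

Lemma Rj_integrand_nonneg u : 0 < u < 1 -> 0 <= h u.
Proof.
  intros Hu. unfold Rj_integrand.
  apply Rmult_le_pos; [apply Rmult_le_pos; apply pow_le; lra|].
  apply Rdiv_le_0_compat; [apply Rmult_le_pos; apply Rlt_le, Rpower_pos | apply pow_lt; lra].
Qed.

Lemma Rj_integrand_le u : 0 < u < 1 -> h u <= Rpower u (INR j - 1 - alpha).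
Proof.
  intros Hu. rewrite Rj_integrand_Rpower by auto.
  assert (INR j <= INR k) by (apply le_INR; auto).
  assert (Rpower (1 - u) (INR k - INR j + alpha - 1) <= 1).
  { apply Rle_trans with (Rpower 1 (INR k - INR j + alpha - 1)).
    - apply Rle_Rpower_l; lra.
    - rewrite Rpower_1_l. lra. }
  pose proof (Rpower_pos u (INR j - 1 - alpha)).
  pose proof (Rpower_pos (1 - u) (INR k - INR j + alpha - 1)). nra.
Qed.

Lemma Rj_integrand_le_2 u : 1/2 <= u < 1 -> h u <= 2.
Proof.
  intros Hu. apply Rle_trans with (Rpower u (INR j - 1 - alpha)); [apply Rj_integrand_le; lra|].
  apply Rpower_le_2; [lra|]. assert (2 <= INR j) by (apply (le_INR 2); auto). lra.
Qed.

Lemma Rj_integrand_ex_RInt v w : 0 < v < 1 -> 0 < w < 1 -> ex_RInt h v w.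
Proof.
  intros Hv Hw. apply (ex_RInt_continuous (V := R_CompleteNormedModule)).
  intros z Hz. apply Rj_integrand_continuous.
  pose proof (Rmin_r v w). pose proof (Rmin_l v w).
  pose proof (Rmax_r v w). pose proof (Rmax_l v w).
  assert (0 < Rmin v w) by (apply Rmin_glb_lt; lra).
  assert (Rmax v w < 1) by (apply Rmax_lub_lt; lra). lra.
Qed.

Lemma near0_majorant_exponent_pos : 0 < INR j - alpha.
Proof. assert (2 <= INR j) by (apply (le_INR 2); auto). lra. Qed.

Lemma near0_majorant_pos v : 0 < G v.
Proof. apply Rdiv_lt_0_compat; [apply Rpower_pos | apply near0_majorant_exponent_pos]. Qed.

Lemma near0_majorant_le v w : 0 < v <= w -> G v <= G w.
Proof.
  intros Hvw. pose proof near0_majorant_exponent_pos. unfold near0_majorant, Rdiv.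
  apply Rmult_le_compat_r; [apply Rlt_le, Rinv_0_lt_compat; lra|]. apply Rle_Rpower_l; lra.
Qed.

Lemma near0_majorant_small e : 0 < e -> exists d, 0 < d /\ forall v, 0 < v <= d -> G v <= e.
Proof.
  intros He. pose proof near0_majorant_exponent_pos as Ha. set (a := INR j - alpha) in *.
  exists (Rpower (e * a) (1 / a)). split; [apply Rpower_pos|]. intros v Hv.
  apply Rle_trans with (G (Rpower (e * a) (1 / a))); [apply near0_majorant_le; auto|].
  unfold near0_majorant. fold a. rewrite Rpower_mult.
  replace (1 / a * a) with 1 by (field; lra). rewrite Rpower_1 by nra. right. field. lra.
Qed.

Lemma is_RInt_Rpower_near0 v w : 0 < v <= w ->
  is_RInt (fun u => Rpower u (INR j - 1 - alpha)) v w (G w - G v).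
Proof.
  intros Hv. pose proof near0_majorant_exponent_pos.
  apply (is_RInt_derive G).
  - intros x Hx. rewrite Rmin_left in Hx by lra. rewrite Rmax_right in Hx by lra.
    unfold near0_majorant, Rpower. auto_derive; [lra|].
    replace ((INR j - 1 - alpha) * ln x) with ((INR j - alpha) * ln x + - ln x) by ring.
    rewrite exp_plus, exp_Ropp, exp_ln by lra. field. split; lra.
  - intros x Hx. rewrite Rmin_left in Hx by lra.
    apply (ex_derive_continuous (K := R_AbsRing) (V := R_NormedModule)).
    unfold Rpower. auto_derive. lra.
Qed.

Lemma RInt_Rj_integrand_bounds v w : 0 < v <= w -> w < 1 -> 0 <= RInt h v w <= G w - G v.
Proof.
  intros Hv Hw. split.
  - apply RInt_ge_0; [lra | apply Rj_integrand_ex_RInt; lra |].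
    intros. apply Rj_integrand_nonneg. lra.
  - rewrite <- (is_RInt_unique _ _ _ _ (is_RInt_Rpower_near0 v w Hv)).
    apply RInt_le; [lra | apply Rj_integrand_ex_RInt; lra | |].
    + eexists. apply is_RInt_Rpower_near0. lra.
    + intros x Hx. apply Rj_integrand_le. lra.
Qed.

Lemma Rabs_RInt_Rj_integrand v w : 0 < v < 1 -> 0 < w < 1 ->
  Rabs (RInt h v w) = RInt h (Rmin v w) (Rmax v w).
Proof.
  intros Hv Hw. destruct (Rle_dec v w).
  - rewrite Rmin_left, Rmax_right by lra. apply Rabs_right, Rle_ge.
    apply RInt_Rj_integrand_bounds; lra.
  - rewrite Rmin_right, Rmax_left by lra.
    rewrite <- opp_RInt_swap by (apply Rj_integrand_ex_RInt; lra).
    change (Rabs (- RInt h w v) = RInt h w v). rewrite Rabs_Ropp.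
    apply Rabs_right, Rle_ge. apply RInt_Rj_integrand_bounds; lra.
Qed.

Lemma Rabs_RInt_near0 v w : 0 < v < 1 -> 0 < w < 1 -> Rabs (RInt h v w) <= Rmax (G v) (G w).
Proof.
  intros Hv Hw. rewrite Rabs_RInt_Rj_integrand by auto.
  pose proof (near0_majorant_pos v). pose proof (near0_majorant_pos w).
  pose proof (Rmax_l (G v) (G w)). pose proof (Rmax_r (G v) (G w)).
  destruct (Rle_dec v w).
  - rewrite Rmin_left, Rmax_right by lra.
    pose proof (RInt_Rj_integrand_bounds v w ltac:(lra) ltac:(lra)). lra.
  - rewrite Rmin_right, Rmax_left by lra.
    pose proof (RInt_Rj_integrand_bounds w v ltac:(lra) ltac:(lra)). lra.
Qed.

Lemma RInt_Rj_integrand_near1 v w : 1/2 <= v <= w -> w < 1 -> RInt h v w <= 2 * (w - v).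
Proof.
  intros Hv Hw.
  replace (2 * (w - v)) with (RInt (fun _ => 2) v w) by (rewrite RInt_const; apply Rmult_comm).
  apply RInt_le; [lra | apply Rj_integrand_ex_RInt; lra | apply ex_RInt_const|].
  intros u Hu. apply Rj_integrand_le_2. lra.
Qed.

Lemma Rabs_RInt_near1 v w : 1/2 <= v < 1 -> 1/2 <= w < 1 -> Rabs (RInt h v w) <= 2 * Rabs (w - v).
Proof.
  intros Hv Hw. rewrite Rabs_RInt_Rj_integrand by lra. destruct (Rle_dec v w).
  - rewrite Rmin_left, Rmax_right, Rabs_right by lra. apply RInt_Rj_integrand_near1; lra.
  - rewrite Rmin_right, Rmax_left, Rabs_left by lra.
    replace (- (w - v)) with (v - w) by ring. apply RInt_Rj_integrand_near1; lra.
Qed.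

Lemma at_right0_between d : 0 < d -> at_right 0 (fun x => 0 < x < d).
Proof.
  intros Hd. exists (mkposreal d Hd). intros y Hy Hy0. change (Rabs (y - 0) < d) in Hy.
  rewrite Rminus_0_r, Rabs_right in Hy by lra. lra.
Qed.

Lemma at_left1_between d : 0 < d -> at_left 1 (fun x => 1 - d < x < 1).
Proof.
  intros Hd. exists (mkposreal d Hd). intros y Hy Hy0. change (Rabs (y - 1) < d) in Hy.
  rewrite Rabs_left in Hy by lra. lra.
Qed.

Lemma Rj_integral_exists : exists I : R,
  filterlim (fun ab : R * R => RInt h (fst ab) (snd ab))
    (filter_prod (at_right 0) (at_left 1)) (locally I).
Proof.
  apply (proj1 (filterlim_locally_cauchy (U := R_CompleteSpace)
                  (F := filter_prod (at_right 0) (at_left 1)) _)).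
  intros eps. pose proof (cond_pos eps) as He.
  destruct (near0_majorant_small (eps / 4)) as [d0 [Hd0 HG]]; [lra|].
  set (d := Rmin d0 (1/2)). set (d' := Rmin (1/2) (eps / 8)).
  assert (0 < d) by (apply Rmin_pos; lra). assert (0 < d') by (apply Rmin_pos; lra).
  assert (d <= d0) by apply Rmin_l. assert (d <= 1/2) by apply Rmin_r.
  assert (d' <= 1/2) by apply Rmin_l. assert (d' <= eps / 8) by apply Rmin_r.
  exists (fun ab => 0 < fst ab < d /\ 1 - d' < snd ab < 1). split.
  - apply (Filter_prod _ _ _ (fun x => 0 < x < d) (fun y => 1 - d' < y < 1));
      [apply at_right0_between | apply at_left1_between | ]; auto.
  - intros [a1 b1] [a2 b2] [Ha1 Hb1] [Ha2 Hb2]. simpl in *.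
    change (Rabs (RInt h a2 b2 - RInt h a1 b1) < eps).
    assert (Hsplit : RInt h a1 b1 = RInt h a1 a2 + RInt h a2 b2 + RInt h b2 b1).
    { assert (RInt h a1 a2 + RInt h a2 b2 = RInt h a1 b2)
        by (apply (RInt_Chasles h); apply Rj_integrand_ex_RInt; lra).
      assert (RInt h a1 b2 + RInt h b2 b1 = RInt h a1 b1)
        by (apply (RInt_Chasles h); apply Rj_integrand_ex_RInt; lra).
      lra. }
    pose proof (Rabs_RInt_near0 a1 a2 ltac:(lra) ltac:(lra)) as A.
    pose proof (Rabs_RInt_near1 b2 b1 ltac:(lra) ltac:(lra)) as B.
    assert (Rmax (G a1) (G a2) <= eps / 4) by (apply Rmax_lub; apply HG; lra).
    assert (Rabs (b1 - b2) <= eps / 8) by (apply Rabs_le; lra).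
    rewrite Hsplit.
    replace (RInt h a2 b2 - (RInt h a1 a2 + RInt h a2 b2 + RInt h b2 b1))
      with (- (RInt h a1 a2 + RInt h b2 b1)) by ring.
    rewrite Rabs_Ropp. eapply Rle_lt_trans; [apply Rabs_triang|]. lra.
Qed.

Variable I : R.
Hypothesis HI : filterlim (fun ab : R * R => RInt h (fst ab) (snd ab))
                  (filter_prod (at_right 0) (at_left 1)) (locally I).

Lemma is_RInt_gen_Rj_integrand : is_RInt_gen h (at_right 0) (at_left 1) I.
Proof.
  apply (filterlimi_lim_ext_loc (fun ab : R * R => RInt h (fst ab) (snd ab))); auto.
  apply (Filter_prod _ _ _ (fun x => 0 < x < 1) (fun y => 1 - 1 < y < 1));
    [apply at_right0_between | apply at_left1_between | ]; try lra.
  intros x y Hx Hy. apply (RInt_correct (V := R_CompleteNormedModule)).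
  apply Rj_integrand_ex_RInt; simpl; lra.
Qed.

Lemma RInt_Rj_integrand_near_I eta : 0 < eta -> exists d, 0 < d /\
  forall v w, 0 < v < d -> 1 - d < w < 1 -> Rabs (RInt h v w - I) < eta.
Proof.
  intros Heta.
  destruct (HI _ (locally_ball I (mkposreal eta Heta))) as [Q R [e1 He1] [e2 He2] HP].
  exists (Rmin e1 e2). split; [apply Rmin_pos; apply cond_pos|].
  intros v w Hv Hw. pose proof (Rmin_l e1 e2). pose proof (Rmin_r e1 e2).
  apply (HP v w).
  - apply He1; [|lra]. change (Rabs (v - 0) < e1). rewrite Rminus_0_r, Rabs_right; lra.
  - apply He2; [|lra]. change (Rabs (w - 1) < e2). rewrite Rabs_left; lra.
Qed.

Lemma RInt_Rj_integrand_le_I v w : 0 < v <= w -> w < 1 -> RInt h v w <= I.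
Proof.
  intros Hv Hw. apply Rnot_lt_le. intros Hlt.
  destruct (RInt_Rj_integrand_near_I (RInt h v w - I)) as [d [Hd Hap]]; [lra|].
  set (v' := Rmin v d / 2). set (w' := (Rmax w (1 - d) + 1) / 2).
  assert (0 < v' <= v /\ v' < d).
  { unfold v'. pose proof (Rmin_l v d). pose proof (Rmin_r v d).
    assert (0 < Rmin v d) by (apply Rmin_pos; lra). lra. }
  assert (w <= w' < 1 /\ 1 - d < w').
  { unfold w'. pose proof (Rmax_l w (1 - d)). pose proof (Rmax_r w (1 - d)).
    assert (Rmax w (1 - d) < 1) by (apply Rmax_lub_lt; lra). lra. }
  specialize (Hap v' w' ltac:(lra) ltac:(lra)).
  assert (RInt h v' v + RInt h v w = RInt h v' w)
    by (apply (RInt_Chasles h); apply Rj_integrand_ex_RInt; lra).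
  assert (RInt h v' w + RInt h w w' = RInt h v' w')
    by (apply (RInt_Chasles h); apply Rj_integrand_ex_RInt; lra).
  pose proof (RInt_Rj_integrand_bounds v' v ltac:(lra) ltac:(lra)).
  pose proof (RInt_Rj_integrand_bounds w w' ltac:(lra) ltac:(lra)).
  rewrite Rabs_right in Hap; lra.
Qed.

End Integrand.

Local Ltac pos := repeat (apply Rmult_lt_0_compat || apply Rdiv_lt_0_compat || apply pow_lt
  || apply exp_pos || apply Rinv_0_lt_compat); try lra.

Lemma RInt_between_const (f : R -> R) v w c : v <= w -> ex_RInt f v w ->
  (forall u, v <= u <= w -> (1 - c) * f v <= f u <= (1 + c) * f v) ->
  (1 - c) * (f v * (w - v)) <= RInt f v w <= (1 + c) * (f v * (w - v)).
Proof.
  intros Hvw Hf Hu.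
  assert (E : forall a, a * (f v * (w - v)) = RInt (fun _ => a * f v) v w).
  { intros a. rewrite RInt_const. change (a * (f v * (w - v)) = (w - v) * (a * f v)). ring. }
  rewrite !E. split; apply RInt_le; auto; try apply ex_RInt_const; intros; apply Hu; lra.
Qed.

Definition grid (x L : R) : R := L / (x + L).

Lemma grid_bounds x L : 0 < x -> 0 < L -> 0 < grid x L < 1.
Proof.
  intros Hx HL. unfold grid. split; [pos|].
  apply (Rmult_lt_reg_r (x + L)); [lra|]. unfold Rdiv. rewrite Rmult_assoc, Rinv_l; lra.
Qed.

Lemma grid_succ_sub x L : 0 < x -> 0 <= L ->
  grid x (L + 1) - grid x L = x / ((x + L) * (x + L + 1)).
Proof. intros. unfold grid. field. lra. Qed.

Lemma grid_le x L L' : 0 < x -> 0 <= L <= L' -> grid x L <= grid x L'.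
Proof.
  intros Hx HL. unfold grid.
  apply (Rmult_le_reg_r ((x + L) * (x + L'))); [pos|].
  replace (L / (x + L) * ((x + L) * (x + L'))) with (L * (x + L')) by (field; lra).
  replace (L' / (x + L') * ((x + L) * (x + L'))) with (L' * (x + L)) by (field; lra).
  nra.
Qed.

Lemma grid_ratios_near_one x L u : 0 < x -> 1 <= L -> grid x L <= u <= grid x (L + 1) ->
  near_one (u / grid x L) (1 / L) /\ near_one ((1 - u) / (1 - grid x L)) (1 / L).
Proof.
  unfold grid. intros Hx HL Hu.
  assert (U1 : L <= u * (x + L)).
  { apply Rle_trans with (L / (x + L) * (x + L)); [right; field; lra|].
    apply Rmult_le_compat_r; lra. }
  assert (U2 : u * (x + L + 1) <= L + 1).
  { apply Rle_trans with ((L + 1) / (x + (L + 1)) * (x + L + 1)); [apply Rmult_le_compat_r; lra|].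
    right. field. lra. }
  assert (U3 : 1 - u <= x / L).
  { apply Rle_trans with (1 - L / (x + L)); [lra|].
    replace (1 - L / (x + L)) with (x / (x + L)) by (field; lra).
    unfold Rdiv. apply Rmult_le_compat_l; [lra|]. apply Rinv_le_contravar; lra. }
  assert (0 < 1 / L) by pos. assert (0 < u) by (apply Rlt_le_trans with (L / (x + L)); [pos | lra]).
  replace (u / (L / (x + L))) with (u * (x + L) / L) by (field; lra).
  replace ((1 - u) / (1 - L / (x + L))) with ((1 - u) * (x + L) / x) by (field; lra).
  rewrite !near_one_iff. split; split.
  - apply Rle_trans with 1; [lra|]. apply (Rmult_le_reg_r L); [lra|].
    replace (u * (x + L) / L * L) with (u * (x + L)) by (field; lra). lra.
  - apply (Rmult_le_reg_r L); [lra|].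
    replace (u * (x + L) / L * L) with (u * (x + L)) by (field; lra).
    replace ((1 + 1 / L) * L) with (L + 1) by (field; lra). nra.
  - apply (Rmult_le_reg_r x); [lra|].
    replace ((1 - u) * (x + L) / x * x) with ((1 - u) * (x + L)) by (field; lra).
    replace ((1 - 1 / L) * x) with (x - x / L) by (field; lra). nra.
  - apply Rle_trans with 1; [|lra]. apply (Rmult_le_reg_r x); [lra|].
    replace ((1 - u) * (x + L) / x * x) with ((1 - u) * (x + L)) by (field; lra). nra.
Qed.

Section Slices.

Variables (alpha : R) (k j : nat).
Hypotheses (Halpha : 1 < alpha < 2) (Hj : (2 <= j)%nat) (Hjk : (j <= k)%nat).

Local Notation h := (Rj_integrand alpha k j).
Local Notation e1 := (INR j - 1 - alpha).
Local Notation e2 := (INR k - INR j + alpha - 1).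

Lemma Rj_integrand_grid_step x L : 0 < x -> 1 <= L ->
  h (grid x L) * (grid x (L + 1) - grid x L)
  = Rpower x alpha * Rpower L (- (1 + alpha)) * slice_model k j x L.
Proof.
  intros Hx HL. pose proof (grid_bounds x L Hx ltac:(lra)).
  rewrite Rj_integrand_Rpower, grid_succ_sub by (auto; lra).
  unfold grid, slice_model.
  replace (1 - L / (x + L)) with (x / (x + L)) by (field; lra).
  apply ln_inv; unfold Rpower; [pos | pos |].
  rewrite !ln_mult by pos. rewrite !ln_div by pos. rewrite !ln_mult by pos.
  rewrite !ln_exp, !ln_pow by pos. rewrite !minus_INR by lia. simpl (INR 1). ring.
Qed.

Lemma Rj_integrand_near_on_slice x L u : 0 < x -> 2 <= L ->
  (4 * Rabs e1 + 8 * Rabs e2) / L <= 1 -> grid x L <= u <= grid x (L + 1) ->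
  near_one (h u / h (grid x L)) ((4 * Rabs e1 + 8 * Rabs e2) / L).
Proof.
  intros Hx HL Hc Hu.
  pose proof (grid_bounds x L Hx ltac:(lra)). pose proof (grid_bounds x (L + 1) Hx ltac:(lra)).
  destruct (grid_ratios_near_one x L u Hx ltac:(lra) Hu) as [R1 R2].
  set (v := grid x L) in *.
  pose proof (Rabs_pos e1). pose proof (Rabs_pos e2).
  assert (HL1 : 1 / L <= 1/2) by (apply Rle_div_l; lra).
  assert (Ec : (4 * Rabs e1 + 8 * Rabs e2) / L
               = 4 * Rabs e1 * (1 / L) + 2 * (4 * Rabs e2 * (1 / L))) by (field; lra).
  assert (0 <= 4 * Rabs e1 * (1 / L)) by (apply Rmult_le_pos; [lra | apply Rlt_le; pos]).
  assert (0 <= 4 * Rabs e2 * (1 / L)) by (apply Rmult_le_pos; [lra | apply Rlt_le; pos]).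
  assert (Hh : 0 < h v).
  { rewrite Rj_integrand_Rpower by (auto; lra). apply Rmult_lt_0_compat; apply Rpower_pos. }
  replace (h u / h v) with (Rpower (u / v) e1 * Rpower ((1 - u) / (1 - v)) e2).
  2:{ rewrite !Rj_integrand_Rpower by (auto; lra).
      rewrite !Rpower_div by lra. field. split; apply Rgt_not_eq, Rpower_pos. }
  rewrite Ec. apply near_one_mul; [apply Rpower_near_one | apply Rpower_near_one |]; auto; lra.
Qed.

Lemma slice_integral_near_model x L : 0 < x -> 2 <= L ->
  (4 * Rabs e1 + 8 * Rabs e2) / L <= 1 ->
  near_one (RInt h (grid x L) (grid x (L + 1))
            / (Rpower x alpha * Rpower L (- (1 + alpha)) * slice_model k j x L))
           ((4 * Rabs e1 + 8 * Rabs e2) / L).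
Proof.
  intros Hx HL Hc. rewrite <- Rj_integrand_grid_step by lra.
  pose proof (grid_bounds x L Hx ltac:(lra)). pose proof (grid_bounds x (L + 1) Hx ltac:(lra)).
  pose proof (grid_le x L (L + 1) Hx ltac:(lra)).
  assert (Hstep : 0 < grid x (L + 1) - grid x L) by (rewrite grid_succ_sub by lra; pos).
  assert (Hh : 0 < h (grid x L)).
  { rewrite Rj_integrand_Rpower by (auto; lra). apply Rmult_lt_0_compat; apply Rpower_pos. }
  apply near_one_ratio; [pos|].
  apply RInt_between_const; auto.
  - apply Rj_integrand_ex_RInt; lra.
  - intros u Hu. pose proof (Rj_integrand_near_on_slice x L u Hx HL Hc Hu) as N.
    rewrite near_one_iff in N. destruct N as [N1 N2].
    split; [apply (Rmult_le_reg_r (/ h (grid x L))) | apply (Rmult_le_reg_r (/ h (grid x L)))];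
      try (apply Rinv_0_lt_compat; lra);
      rewrite Rmult_assoc, Rinv_r, Rmult_1_r by lra; auto.
Qed.

End Slices.

Definition slice (alpha : R) (k j : nat) (x : R) (l : nat) : R :=
  RInt (Rj_integrand alpha k j) (grid x (INR l)) (grid x (INR (S l))).

Lemma slice_nonneg alpha k j x l : 0 < x -> (1 <= l)%nat -> 0 <= slice alpha k j x l.
Proof.
  intros Hx Hl. assert (1 <= INR l) by (apply (le_INR 1); auto).
  pose proof (grid_bounds x (INR l) Hx ltac:(lra)).
  pose proof (grid_bounds x (INR l + 1) Hx ltac:(lra)).
  pose proof (grid_le x (INR l) (INR l + 1) Hx ltac:(lra)).
  unfold slice. rewrite S_INR.
  apply RInt_ge_0; auto; [apply Rj_integrand_ex_RInt; lra|].
  intros. apply Rj_integrand_nonneg. lra.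
Qed.

Section TermAsymptotics.

Variables (alpha p0 : R) (p : nat -> R) (k j : nat).
Hypotheses (Halpha : 1 < alpha < 2) (Hj : (2 <= j)%nat) (Hjk : (j <= k)%nat) (Hp0 : 0 < p0).
Hypothesis Hp_equiv : is_lim_seq (fun l : nat => p l / (p0 * Rpower (INR l) (- (1 + alpha)))) 1.

Local Notation e1 := (INR j - 1 - alpha).
Local Notation e2 := (INR k - INR j + alpha - 1).

Lemma term_near_slice_at x l theta : 0 < theta <= 1/38 -> (k <= l)%nat -> 2 <= INR l ->
  4 * INR k ^ 2 <= theta * x -> 4 * INR k ^ 2 <= theta * INR l ->
  4 * Rabs e1 + 8 * Rabs e2 <= theta * INR l ->
  near_one (p l / (p0 * Rpower (INR l) (- (1 + alpha)))) theta ->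
  (1 - 19 * theta) * (p0 * slice alpha k j x l) <= Rpower x alpha * (p l * binom_ratio k j x l)
  <= (1 + 19 * theta) * (p0 * slice alpha k j x l).
Proof.
  intros Htheta Hkl HL Hx HLk HLe Nq. set (L := INR l) in *.
  set (q := p l / (p0 * Rpower L (- (1 + alpha)))) in Nq.
  assert (Hk : 1 <= INR k ^ 2) by (assert (1 <= INR k) by (apply (le_INR 1); lia); simpl; nra).
  assert (Hx0 : 0 < x) by nra.
  assert (Hc : (4 * Rabs e1 + 8 * Rabs e2) / L <= theta) by (apply Rle_div_l; lra).
  set (D := slice_model k j x L).
  assert (HD : 0 < D) by (unfold D, slice_model; pos).
  set (sigma := slice alpha k j x l / (Rpower x alpha * Rpower L (- (1 + alpha)) * D)).
  assert (Nsigma : near_one sigma theta).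
  { eapply near_one_weaken; [|exact Hc]. unfold sigma, slice. rewrite S_INR.
    apply slice_integral_near_model; auto; lra. }
  assert (Ntau : near_one (binom_ratio k j x l / D) (7 * theta))
    by (apply binom_ratio_near_model; auto; try lia; lra).
  assert (Hsigma : 0 < sigma) by (rewrite near_one_iff in Nsigma; lra).
  (* The errors theta, 7 theta and 2 theta of q, binom_ratio / D and / sigma compose to 19 theta. *)
  assert (Nrho : near_one (q * (binom_ratio k j x l / D) * / sigma) (19 * theta)).
  { eapply near_one_weaken.
    - apply near_one_mul; [apply near_one_mul; eauto; lra | apply near_one_inv; eauto; lra | lra].
    - lra. }
  assert (Eterm : Rpower x alpha * (p l * binom_ratio k j x l)
                  = q * (binom_ratio k j x l / D) * / sigma * (p0 * slice alpha k j x l)).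
  { pose proof (Rpower_pos x alpha). pose proof (Rpower_pos L (- (1 + alpha))).
    assert (Es : slice alpha k j x l = sigma * (Rpower x alpha * Rpower L (- (1 + alpha)) * D))
      by (unfold sigma; field; repeat split; lra).
    rewrite Es. unfold q. field. repeat split; lra. }
  pose proof (slice_nonneg alpha k j x l Hx0 ltac:(lia)).
  rewrite Eterm. rewrite near_one_iff in Nrho.
  split; apply Rmult_le_compat_r; nra.
Qed.

Lemma term_near_slice delta : 0 < delta <= 1/2 -> exists L0 X0, (k <= L0)%nat /\ 0 < X0 /\
  forall x l, X0 <= x -> (L0 <= l)%nat ->
    (1 - delta) * (p0 * slice alpha k j x l) <= Rpower x alpha * (p l * binom_ratio k j x l)
    <= (1 + delta) * (p0 * slice alpha k j x l).
Proof.
  intros Hdelta. set (theta := delta / 19).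
  assert (Htheta : 0 < theta <= 1/38) by (unfold theta; lra).
  replace delta with (19 * theta) by (unfold theta; field).
  destruct (proj2 (is_lim_seq_spec _ _) Hp_equiv (mkposreal theta (proj1 Htheta))) as [N HN].
  set (ck := 4 * INR k ^ 2).
  set (ce := 4 * Rabs e1 + 8 * Rabs e2).
  assert (Hck : 0 <= ck) by (unfold ck; simpl; pose proof (pos_INR k); nra).
  assert (Hce : 0 <= ce) by (unfold ce; pose proof (Rabs_pos e1); pose proof (Rabs_pos e2); lra).
  assert (Hcq : 0 <= (ck + ce) / theta) by (apply Rdiv_le_0_compat; lra).
  destruct (INR_unbounded (2 + (ck + ce) / theta)) as [L1 HL1].
  exists (Nat.max L1 (Nat.max N k)), (ck / theta + 1).
  assert (0 <= ck / theta) by (apply Rdiv_le_0_compat; lra).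
  split; [lia | split; [lra|]].
  intros x l Hx Hl.
  assert (HL : 2 + (ck + ce) / theta <= INR l)
    by (apply Rlt_le, Rlt_le_trans with (INR L1); auto; apply le_INR; lia).
  assert (HLc : ck + ce <= INR l * theta) by (apply Rle_div_l; lra).
  assert (Hxc : ck <= x * theta) by (apply Rle_div_l; lra).
  apply term_near_slice_at; try lia; try (fold ck ce; nra).
  apply Rlt_le, HN. lia.
Qed.

End TermAsymptotics.

Lemma series_nonneg_bounds (a : nat -> R) lo hi : (forall n, 0 <= a n) ->
  (forall n, sum_f_R0 a n <= hi) -> (forall e, 0 < e -> exists n, lo - e <= sum_f_R0 a n) ->
  ex_series a /\ lo <= Series a <= hi.
Proof.
  intros Ha Hhi Hlo.
  assert (Hgrow : Un_growing (sum_f_R0 a)) by (intros n; simpl; pose proof (Ha (S n)); lra).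
  assert (Hub : has_ub (sum_f_R0 a)) by (exists hi; intros y [n ->]; apply Hhi).
  destruct (growing_cv _ Hgrow Hub) as [l Hl].
  assert (Hs : is_series a l) by (apply is_series_Reals; exact Hl).
  rewrite (is_series_unique a l Hs). split; [exists l; exact Hs | split].
  - apply Rle_plus_epsilon. intros e He. destruct (Hlo e He) as [n Hn].
    pose proof (growing_ineq _ l Hgrow Hl n). lra.
  - apply (Rle_cv_lim (Vn := fun _ => hi) Hhi Hl).
    intros e He. exists 0%nat. intros n _. unfold Rdist. rewrite Rminus_eq_0, Rabs_R0. auto.
Qed.

Lemma Series_near_scal (f g : nat -> R) c delta : 0 <= c -> delta <= 1 ->
  ex_series g -> (forall i, 0 <= g i) ->
  (forall i, (1 - delta) * (c * g i) <= f i <= (1 + delta) * (c * g i)) ->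
  ex_series f /\ (1 - delta) * (c * Series g) <= Series f <= (1 + delta) * (c * Series g).
Proof.
  intros Hc Hdelta Hg Hg0 Hfg.
  assert (Hlow : forall i, 0 <= (1 - delta) * (c * g i)).
  { intros i. apply Rmult_le_pos; [lra | apply Rmult_le_pos; auto]. }
  assert (Hsc : forall a, ex_series (fun i => a * (c * g i))).
  { intros a. exact (ex_series_scal_l (V := R_NormedModule) a _ (ex_series_scal_l c g Hg)). }
  assert (Hf : ex_series f).
  { apply (ex_series_le f (fun i => (1 + delta) * (c * g i))); [|apply Hsc].
    intros i. change (Rabs (f i) <= (1 + delta) * (c * g i)).
    specialize (Hfg i). specialize (Hlow i). rewrite Rabs_right; lra. }
  split; [exact Hf|]. rewrite <- !Series_scal_l. split.
  - apply Series_le; auto. intros i. specialize (Hfg i). specialize (Hlow i). lra.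
  - apply Series_le; [|apply Hsc]. intros i. specialize (Hfg i). specialize (Hlow i). lra.
Qed.

Lemma binom_ratio_le_pow k j l : (j <= l + 1)%nat ->
  exists C, 0 <= C /\ forall x, INR k + INR l + 1 <= x -> 0 <= binom_ratio k j x l <= C / x ^ j.
Proof.
  intros Hjl. set (r := (l + 1 - j)%nat).
  exists (2 ^ r * INR (fact (l + 1)) / INR (fact r)).
  pose proof (INR_fact_lt_0 r). pose proof (INR_fact_lt_0 (l + 1)).
  split; [apply Rdiv_le_0_compat; [apply Rmult_le_pos; [apply pow_le|]|]; lra|].
  intros x Hx. pose proof (pos_INR k). pose proof (pos_INR l).
  assert (Er : INR r = INR l + 1 - INR j)
    by (unfold r; rewrite minus_INR, plus_INR by lia; reflexivity).
  assert (Hjn : INR j <= INR l + 1) by (pose proof (pos_INR r); lra).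
  destruct (falling_bounds (x + INR l - INR k) r) as [[A0 A1] A2]; [pose proof (pos_INR j); lra|].
  destruct (falling_bounds (x + INR l) (l + 1)) as [[B0 B1] B2]; [rewrite plus_INR; simpl; lra|].
  replace (x + INR l - INR (l + 1) + 1) with x in B1 by (rewrite plus_INR; simpl; ring).
  assert (Hxl : 0 < x ^ (l + 1)) by (apply pow_lt; lra).
  assert (Ex : x ^ (l + 1) = x ^ r * x ^ j) by (rewrite <- pow_add; f_equal; unfold r; lia).
  assert (0 < x ^ r) by (apply pow_lt; lra). assert (0 < x ^ j) by (apply pow_lt; lra).
  assert (HT : binom_ratio k j x l
               = falling (x + INR l - INR k) r * INR (fact (l + 1))
                 / (INR (fact r) * falling (x + INR l) (l + 1)))
    by (unfold binom_ratio, gbinom; fold r; field; repeat split; lra).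
  rewrite HT. split; [apply Rdiv_le_0_compat; [apply Rmult_le_pos|apply Rmult_lt_0_compat]; lra|].
  assert (falling (x + INR l - INR k) r <= (2 * x) ^ r)
    by (apply Rle_trans with ((x + INR l - INR k) ^ r); auto; apply pow_incr; lra).
  apply Rle_trans with ((2 * x) ^ r * INR (fact (l + 1)) / (INR (fact r) * x ^ (l + 1))).
  - unfold Rdiv. apply Rmult_le_compat.
    + apply Rmult_le_pos; lra.
    + apply Rlt_le, Rinv_0_lt_compat, Rmult_lt_0_compat; lra.
    + apply Rmult_le_compat_r; lra.
    + apply Rinv_le_contravar; [apply Rmult_lt_0_compat|apply Rmult_le_compat_l]; lra.
  - rewrite Rpow_mult_distr, Ex. right. field. repeat split; lra.
Qed.

Definition scaled_term (p : nat -> R) (alpha : R) (k j : nat) (x : R) (m : nat) : R :=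
  Rpower x alpha * (p (m + (j - 1))%nat * binom_ratio k j x (m + (j - 1))).

Definition scaled_sum (p : nat -> R) (alpha : R) (k j : nat) (x : R) : R :=
  Series (scaled_term p alpha k j x).

Lemma RjKn_sub_limit p alpha b k j K n p0 I : 0 < K -> 0 < n ->
  RjKn p alpha b k j K n - p0 * b / Rpower n (alpha - 1) * I
  = b * Rpower n (1 - alpha) * (scaled_sum p alpha k j (K * n) - p0 * I).
Proof.
  intros HK Hn. unfold scaled_sum, scaled_term. rewrite Series_scal_l.
  rewrite <- Rpower_mult_distr by auto.
  assert (E1 : Rpower n (1 - alpha) = n / Rpower n alpha).
  { unfold Rminus. rewrite Rpower_plus, Rpower_Ropp, Rpower_1 by auto. reflexivity. }
  assert (E2 : Rpower n (alpha - 1) = / Rpower n (1 - alpha))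
    by (rewrite <- Rpower_Ropp; f_equal; ring).
  pose proof (Rpower_pos K alpha). pose proof (Rpower_pos n alpha).
  unfold RjKn. rewrite E2, E1. unfold binom_ratio. field. lra.
Qed.

Section HeadTerms.

Variables (alpha : R) (p : nat -> R) (k j : nat).
Hypotheses (Halpha : 1 < alpha < 2) (Hj : (2 <= j)%nat).
Hypothesis Hp_nonneg : forall l : nat, (1 <= l)%nat -> 0 <= p l.

Lemma scaled_term_small m e : 0 < e ->
  exists X, forall x, X <= x -> 0 <= scaled_term p alpha k j x m <= e.
Proof.
  intros He. set (l := (m + (j - 1))%nat).
  destruct (binom_ratio_le_pow k j l) as [C [HC HT]]; [unfold l; lia|].
  assert (Hpl : 0 <= p l) by (apply Hp_nonneg; unfold l; lia).
  assert (HpC : 0 <= p l * C) by nra.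
  destruct (Rpower_small_at_infinity (alpha - 2) (e / (p l * C + 1))) as [X1 [HX1 Hsmall]];
    [lra | apply Rdiv_lt_0_compat; lra|].
  exists (Rmax X1 (INR k + INR l + 1)). intros x Hx.
  pose proof (Rmax_l X1 (INR k + INR l + 1)). pose proof (Rmax_r X1 (INR k + INR l + 1)).
  pose proof (pos_INR k). pose proof (pos_INR l).
  destruct (HT x ltac:(lra)) as [T0 T1].
  pose proof (Rpower_pos x alpha).
  unfold scaled_term. fold l. split; [apply Rmult_le_pos; [|apply Rmult_le_pos]; lra|].
  assert (Ex : Rpower x alpha / x ^ j = Rpower x (alpha - INR j)).
  { rewrite <- Rpower_pow by lra. unfold Rminus. rewrite Rpower_plus, Rpower_Ropp. reflexivity. }
  assert (Hmono : Rpower x (alpha - INR j) <= Rpower x (alpha - 2)).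
  { apply Rle_Rpower; [lra|]. assert (2 <= INR j) by (apply (le_INR 2); auto). lra. }
  specialize (Hsmall x ltac:(lra)).
  assert (Hfrac : p l * C * (e / (p l * C + 1)) <= e).
  { apply (Rmult_le_reg_r (p l * C + 1)); [lra|].
    replace (p l * C * (e / (p l * C + 1)) * (p l * C + 1)) with (p l * C * e) by (field; lra).
    nra. }
  apply Rle_trans with (p l * C * Rpower x (alpha - INR j)).
  - rewrite <- Ex. replace (p l * C * (Rpower x alpha / x ^ j))
      with (Rpower x alpha * (p l * (C / x ^ j))) by (field; apply pow_nonzero; lra).
    apply Rmult_le_compat_l; [lra|]. apply Rmult_le_compat_l; lra.
  - apply Rle_trans with (p l * C * Rpower x (alpha - 2)); [apply Rmult_le_compat_l; lra|].
    apply Rle_trans with (p l * C * (e / (p l * C + 1))); [apply Rmult_le_compat_l; lra | auto].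
Qed.

Lemma head_sum_small N e : 0 < e ->
  exists X, forall x, X <= x -> 0 <= sum_f_R0 (scaled_term p alpha k j x) N <= e.
Proof.
  revert e. induction N as [|N IH]; intros e He; simpl; [apply scaled_term_small; auto|].
  destruct (IH (e / 2)) as [X1 H1]; [lra|].
  destruct (scaled_term_small (S N) (e / 2)) as [X2 H2]; [lra|].
  exists (Rmax X1 X2). intros x Hx.
  specialize (H1 x (Rle_trans _ _ _ (Rmax_l X1 X2) Hx)).
  specialize (H2 x (Rle_trans _ _ _ (Rmax_r X1 X2) Hx)). lra.
Qed.

End HeadTerms.

Lemma grid_nat_bounds x l : 0 < x -> (1 <= l)%nat -> 0 < grid x (INR l) < 1.
Proof. intros Hx Hl. apply grid_bounds; auto. apply (lt_INR 0); lia. Qed.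

Lemma grid_near1 x L d : 0 < x -> 0 < L -> x < d * L -> 1 - d < grid x L.
Proof.
  intros Hx HL Hd. unfold grid.
  replace (L / (x + L)) with (1 - x / (x + L)) by (field; lra).
  assert (x / (x + L) < d); [|lra].
  apply (Rmult_lt_reg_r (x + L)); [lra|]. unfold Rdiv. rewrite Rmult_assoc, Rinv_l by lra.
  assert (0 < d) by nra. nra.
Qed.

Lemma near0_majorant_grid_small alpha j L0 e : 1 < alpha < 2 -> (2 <= j)%nat -> (1 <= L0)%nat ->
  0 < e -> exists X, 0 < X /\ forall x, X <= x -> near0_majorant alpha j (grid x (INR L0)) <= e.
Proof.
  intros Halpha Hj HL0 He.
  destruct (near0_majorant_small alpha j Halpha Hj e He) as [d [Hd Hsmall]].
  exists (INR L0 / d + 1). pose proof (pos_INR L0).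
  assert (0 <= INR L0 / d) by (apply Rdiv_le_0_compat; lra).
  split; [lra|]. intros x Hx. apply Hsmall.
  split; [apply grid_nat_bounds; auto; lra|].
  assert (INR L0 <= x * d) by (apply Rle_div_l; lra).
  unfold grid. apply Rle_div_l; nra.
Qed.

Lemma sum_slices alpha k j x L0 n : 0 < x -> (1 <= L0)%nat ->
  sum_f_R0 (fun i => slice alpha k j x (L0 + i)) n
  = RInt (Rj_integrand alpha k j) (grid x (INR L0)) (grid x (INR (L0 + S n))).
Proof.
  intros Hx HL0. induction n as [|n IH]; simpl sum_f_R0.
  - unfold slice. rewrite Nat.add_0_r, <- Nat.add_1_r. reflexivity.
  - rewrite IH. unfold slice. replace (L0 + S (S n))%nat with (S (L0 + S n)) by lia.
    apply (RInt_Chasles (Rj_integrand alpha k j));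
      apply Rj_integrand_ex_RInt; apply grid_nat_bounds; auto; lia.
Qed.

Section TailSum.

Variables (alpha : R) (k j : nat).
Hypotheses (Halpha : 1 < alpha < 2) (Hj : (2 <= j)%nat) (Hjk : (j <= k)%nat).
Variable I : R.
Hypothesis HI : filterlim (fun ab : R * R => RInt (Rj_integrand alpha k j) (fst ab) (snd ab))
                  (filter_prod (at_right 0) (at_left 1)) (locally I).

Local Notation h := (Rj_integrand alpha k j).

Lemma slices_series x L0 : 0 < x -> (1 <= L0)%nat ->
  ex_series (fun i => slice alpha k j x (L0 + i)) /\
  I - near0_majorant alpha j (grid x (INR L0)) <= Series (fun i => slice alpha k j x (L0 + i)) <= I.
Proof.
  intros Hx HL0. set (v := grid x (INR L0)).
  assert (Hv : 0 < v < 1) by (apply grid_nat_bounds; auto).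
  assert (Hw : forall n, v <= grid x (INR (L0 + S n)) < 1).
  { intros n. split; [apply grid_le; [auto | split; [apply pos_INR | apply le_INR; lia]]|].
    apply grid_nat_bounds; auto; lia. }
  apply series_nonneg_bounds.
  - intros i. apply slice_nonneg; auto; lia.
  - intros n. rewrite sum_slices by auto. fold v.
    apply (RInt_Rj_integrand_le_I alpha k j Halpha Hj Hjk I HI).
    + specialize (Hw n). lra.
    + apply Hw.
  - intros e He. destruct (RInt_Rj_integrand_near_I alpha k j I HI e He) as [d [Hd Hap]].
    destruct (INR_unbounded (x / d)) as [n Hn]. exists n. rewrite sum_slices by auto. fold v.
    set (w := grid x (INR (L0 + S n))). specialize (Hw n). fold w in Hw.
    assert (Hw1 : 1 - d < w).
    { assert (x < INR n * d) by (apply Rlt_div_l; lra).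
      assert (INR n <= INR (L0 + S n)) by (apply le_INR; lia).
      apply grid_near1; [auto | apply (lt_INR 0); lia | nra]. }
    set (v' := Rmin v d / 2).
    assert (Hv' : 0 < v' <= v /\ v' < d).
    { unfold v'. pose proof (Rmin_l v d). pose proof (Rmin_r v d).
      assert (0 < Rmin v d) by (apply Rmin_pos; lra). lra. }
    specialize (Hap v' w ltac:(lra) ltac:(lra)).
    assert (RInt h v' v + RInt h v w = RInt h v' w)
      by (apply (RInt_Chasles h); apply Rj_integrand_ex_RInt; lra).
    destruct (RInt_Rj_integrand_bounds alpha k j Halpha Hj Hjk v' v ltac:(lra) ltac:(lra)).
    pose proof (near0_majorant_pos alpha j Halpha Hj v').
    rewrite Rabs_lt_between' in Hap. lra.
Qed.

End TailSum.

Section ScaledSum.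

Variables (alpha p0 : R) (p : nat -> R) (k j : nat).
Hypotheses (Halpha : 1 < alpha < 2) (Hj : (2 <= j)%nat) (Hjk : (j <= k)%nat) (Hp0 : 0 < p0).
Hypothesis Hp_nonneg : forall l : nat, (1 <= l)%nat -> 0 <= p l.
Hypothesis Hp_equiv : is_lim_seq (fun l : nat => p l / (p0 * Rpower (INR l) (- (1 + alpha)))) 1.
Variable I : R.
Hypothesis HI : filterlim (fun ab : R * R => RInt (Rj_integrand alpha k j) (fst ab) (snd ab))
                  (filter_prod (at_right 0) (at_left 1)) (locally I).

Lemma Rj_integral_nonneg : 0 <= I.
Proof.
  apply Rle_trans with (RInt (Rj_integrand alpha k j) (1/2) (1/2));
    [rewrite RInt_point; right; reflexivity|].
  apply (RInt_Rj_integrand_le_I alpha k j Halpha Hj Hjk I HI); lra.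
Qed.

Lemma scaled_sum_tail_bounds x L0 delta : 0 < x -> (j <= L0)%nat -> 0 < delta <= 1/2 ->
  (forall l, (L0 <= l)%nat ->
     (1 - delta) * (p0 * slice alpha k j x l) <= Rpower x alpha * (p l * binom_ratio k j x l)
     <= (1 + delta) * (p0 * slice alpha k j x l)) ->
  (1 - delta) * (p0 * (I - near0_majorant alpha j (grid x (INR L0))))
  <= scaled_sum p alpha k j x - sum_f_R0 (scaled_term p alpha k j x) (pred (L0 - (j - 1)))
  <= (1 + delta) * (p0 * I).
Proof.
  intros Hx HL0 Hdelta Hterm. set (M0 := (L0 - (j - 1))%nat).
  set (s := scaled_term p alpha k j x). set (g := fun i => slice alpha k j x (L0 + i)).
  destruct (slices_series alpha k j Halpha Hj Hjk I HI x L0 Hx ltac:(lia)) as [Hg [Tlo Thi]].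
  fold g in Hg, Tlo, Thi.
  destruct (Series_near_scal (fun i => s (M0 + i)%nat) g p0 delta) as [Htail [Tail1 Tail2]];
    auto; try lra.
  - intros i. apply slice_nonneg; auto; lia.
  - intros i. unfold s, scaled_term, g. replace (M0 + i + (j - 1))%nat with (L0 + i)%nat by lia.
    apply Hterm; lia.
  - unfold scaled_sum. fold s.
    rewrite (Series_incr_n s M0) by (try apply (ex_series_incr_n s M0); auto; unfold M0; lia).
    split; [apply Rle_trans with ((1 - delta) * (p0 * Series g)) |
            apply Rle_trans with ((1 + delta) * (p0 * Series g))]; try lra;
      apply Rmult_le_compat_l; try lra; apply Rmult_le_compat_l; lra.
Qed.

Lemma scaled_sum_near e : 0 < e ->
  exists X, 0 < X /\ forall x, X <= x -> Rabs (scaled_sum p alpha k j x - p0 * I) < e.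
Proof.
  intros He. pose proof Rj_integral_nonneg as HI0.
  set (delta := Rmin (1/2) (e / (4 * (p0 * I + 1)))).
  assert (Hdelta : 0 < delta <= 1/2).
  { split; [apply Rmin_pos; [lra | apply Rdiv_lt_0_compat; nra] | apply Rmin_l]. }
  assert (HdI : delta * (p0 * I) <= e / 4).
  { apply Rle_trans with (e / (4 * (p0 * I + 1)) * (p0 * I)).
    - apply Rmult_le_compat_r; [nra | apply Rmin_r].
    - rewrite Rmult_comm, Rmult_div_assoc. apply Rle_div_l; nra. }
  destruct (term_near_slice alpha p0 p k j Halpha Hj Hjk Hp0 Hp_equiv delta Hdelta)
    as [L0 [X0 [HL0k [HX0 Hterm]]]].
  destruct (head_sum_small alpha p k j Halpha Hj Hp_nonneg (pred (L0 - (j - 1))) (e / 4))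
    as [Xh Hhead]; [lra|].
  destruct (near0_majorant_grid_small alpha j L0 (e / (4 * p0)) Halpha Hj ltac:(lia))
    as [Xg [HXg Hsmall]]; [apply Rdiv_lt_0_compat; lra|].
  exists (Rmax X0 (Rmax Xh Xg)). split; [apply Rlt_le_trans with X0; [auto | apply Rmax_l]|].
  intros x Hx. pose proof (Rmax_l X0 (Rmax Xh Xg)). pose proof (Rmax_r X0 (Rmax Xh Xg)).
  pose proof (Rmax_l Xh Xg). pose proof (Rmax_r Xh Xg).
  destruct (scaled_sum_tail_bounds x L0 delta ltac:(lra) ltac:(lia) Hdelta) as [Hlo Hhi].
  { intros l Hl. apply Hterm; [lra | auto]. }
  destruct (Hhead x ltac:(lra)) as [Hh0 Hh1].
  specialize (Hsmall x ltac:(lra)).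
  set (G := near0_majorant alpha j (grid x (INR L0))) in *.
  assert (HG : p0 * G <= e / 4) by (apply Rle_div_r in Hsmall; [nra | lra]).
  assert (0 <= G) by (apply Rlt_le, near0_majorant_pos; auto).
  apply Rabs_lt_between'. split; nra.
Qed.

End ScaledSum.

Theorem lemma5 (b p0 alpha : R) (p : nat -> R) (k j : nat) (c0 : R) :
  0 < b -> 0 < p0 -> 1 < alpha < 2 ->
  (* (p_l)_{l>=1} is a probability distribution on {1,2,...} (p 0 is unused) *)
  (forall l : nat, (1 <= l)%nat -> 0 <= p l) ->
  is_series (fun m : nat => p (S m)) 1 ->
  (* p_l ~ p0 * l^{-(1+alpha)} as l -> oo *)
  is_lim_seq (fun l : nat => p l / (p0 * Rpower (INR l) (- (1 + alpha)))) 1 ->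
  (2 <= j)%nat -> (j <= k)%nat -> 0 < c0 ->
  exists I : R,
    is_RInt_gen (Rj_integrand alpha k j) (at_right 0) (at_left 1) I /\
    forall eps : R, 0 < eps ->
      exists K0 : R, forall K n : R, 1 <= K -> K0 <= K -> c0 / 2 <= n ->
        Rabs (RjKn p alpha b k j K n - p0 * b / Rpower n (alpha - 1) * I) < eps.
Proof.
  intros Hb Hp0 Halpha Hp _ Hp_equiv Hj Hjk Hc0.
  destruct (Rj_integral_exists alpha k j Halpha Hj Hjk) as [I HI].
  exists I. split; [exact (is_RInt_gen_Rj_integrand alpha k j I HI)|].
  intros eps Heps. set (Cn := Rpower (c0 / 2) (1 - alpha)).
  assert (HCn : 0 < b * Cn) by (apply Rmult_lt_0_compat; [lra | apply Rpower_pos]).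
  destruct (scaled_sum_near alpha p0 p k j Halpha Hj Hjk Hp0 Hp Hp_equiv I HI (eps / (b * Cn)))
    as [X [HX Hnear]]; [apply Rdiv_lt_0_compat; lra|].
  exists (2 * X / c0). intros K n HK1 HK0 Hn.
  assert (HKn : X <= K * n).
  { apply Rle_trans with (2 * X / c0 * (c0 / 2)); [right; field; lra|].
    apply Rmult_le_compat; try lra. apply Rdiv_le_0_compat; lra. }
  rewrite RjKn_sub_limit by lra.
  assert (Hn1 : 0 < Rpower n (1 - alpha) <= Cn)
    by (split; [apply Rpower_pos | apply Rpower_le_neg; lra]).
  specialize (Hnear (K * n) HKn).
  rewrite !Rabs_mult, (Rabs_right b), (Rabs_right (Rpower n (1 - alpha))) by lra.
  apply Rle_lt_trans with (b * Cn * Rabs (scaled_sum p alpha k j (K * n) - p0 * I)).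
  - apply Rmult_le_compat_r; [apply Rabs_pos | apply Rmult_le_compat_l; lra].
  - apply (Rmult_lt_reg_r (/ (b * Cn))); [apply Rinv_0_lt_compat; lra|].
    replace (b * Cn * Rabs (scaled_sum p alpha k j (K * n) - p0 * I) * / (b * Cn))
      with (Rabs (scaled_sum p alpha k j (K * n) - p0 * I)) by (field; lra).
    exact Hnear.
Qed.
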